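(* If $(\Lambda,Y)$ is an extensible graph with parameters $(t,s,\bar s)$, then its complementary graph $(\bar\Lambda,Y)$ is also extensible, and its parameters $(\bar t,s',\bar s')$ satisfy $s'=\bar s$, $\bar s'=s$ and $t+\bar t=s+\bar s-2=s'+\bar s'-2$.
   Context: A finite simple graph $(\Lambda,Y)$ is extensible with parameters $(t,s,\bar s)$ (nonnegative integers) if: (1) $\Lambda$ has diameter $2$; (2) for every $y\in Y$, with $\Lambda(y,d)$ the set of vertices at distance $d$ from $y$: (a) $|\Lambda(y,1)|=2s$; (b) $|\Lambda(y,2)|=2\bar s$; (c) every $z\in\Lambda(y,1)$ is adjacent to exactly $\bar s$ points of $\Lambda(y,2)$ and exactly $t=2s-\bar s-1$ points of $\Lambda(y,1)$; (d) every $z\in\Lambda(y,2)$ is adjacent to exactly $s$ points of $\Lambda(y,2)$ and exactly $s$ points of $\Lambda(y,1)$; (3) every edge lies in exactly $t$ triangles; (4) $|Y|=1+2s+2\bar s$. The complementary graph $(\bar\Lambda,Y)$ has vertex set $Y$ and as edges the non-edges of $\Lambda$. *)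

From mathcomp Require Import all_boot.
Set Implicit Arguments. Unset Strict Implicit. Unset Printing Implicit Defensive.

Section Graphs.
Variable T : finType.

Definition simple_graph (e : rel T) : Prop :=
  symmetric e /\ irreflexive e.

Definition nbhd1 (e : rel T) (y : T) : {set T} := [set z | e y z].

Definition nbhd2 (e : rel T) (y : T) : {set T} :=
  [set z | [&& z != y, ~~ e y z & [exists w, e y w && e w z]]].

Definition diameter2 (e : rel T) : Prop :=
  (forall x y, x != y -> e x y \/ exists w, e x w /\ e w y) /\
  (exists x y, x != y /\ ~~ e x y).

(* Extensible graph with parameters (t, s, sb) (sb stands for \bar s);
   the relation t = 2s - sb - 1 is stated without truncated subtraction. *)
Definition extensible (e : rel T) (t s sb : nat) : Prop :=
  [/\ t + sb + 1 = 2 * s,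
      diameter2 e,
      (forall y,
         [/\ #|nbhd1 e y| = 2 * s,
             #|nbhd2 e y| = 2 * sb,
             (forall z, z \in nbhd1 e y ->
                #|nbhd2 e y :&: nbhd1 e z| = sb /\
                #|nbhd1 e y :&: nbhd1 e z| = t) &
             (forall z, z \in nbhd2 e y ->
                #|nbhd2 e y :&: nbhd1 e z| = s /\
                #|nbhd1 e y :&: nbhd1 e z| = s)]),
      (forall x y, e x y -> #|[set z | e x z && e y z]| = t) &
      #|T| = 1 + 2 * s + 2 * sb].

Definition compl_graph (e : rel T) : rel T := fun x y => (x != y) && ~~ e x y.

End Graphs.

From mathcomp Require Import all_boot.
From mathcomp Require Import zify.

(* In a graph of diameter 2 the complement swaps the two spheres around every
   vertex y: the complementary neighbours of y are its original distance-2
   points, and conversely.  Every local count of the complement is then the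
   size of a sphere minus an original count; e.g. a complementary neighbour z
   of y lies in the second sphere of y, meets it in s original neighbours, and
   so has 2 sb - s - 1 complementary neighbours there.  The one non-formal
   point is that an original neighbour z of y is at complementary distance 2,
   i.e. that the sb neighbours of z in the second sphere of y do not exhaust
   it; this follows from 2 sb > s, obtained by the same count at a
   non-adjacent pair. *)

Section Complement.
Context {T : finType} {e : rel T}.
Hypothesis e_irr : irreflexive e.

Lemma card_nbhd1_complI (A : {set T}) z :
  #|A :&: nbhd1 (compl_graph e) z| + #|A :&: nbhd1 e z| + (z \in A) = #|A|.
Proof.
have -> : A :&: nbhd1 (compl_graph e) z = (A :\: nbhd1 e z) :\ z.
  apply/setP => w; rewrite !inE /compl_graph eq_sym.
  by case: (w \in A); case: (w == z); case: (e z w).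
rewrite -(cardsID (nbhd1 e z) A) (cardsD1 z (A :\: nbhd1 e z)) !inE e_irr /=.
by case: (z \in A) => /=; lia.
Qed.

Hypothesis e_sym : symmetric e.
Context {t s sb : nat}.
Hypothesis e_ext : extensible e t s sb.

Lemma nbhd1_compl_nbhd2 y : nbhd1 (compl_graph e) y = nbhd2 e y.
Proof.
have [_ [reach _] _ _ _] := e_ext.
apply/setP => z; rewrite !inE /compl_graph eq_sym.
case: eqP => //= /eqP zNy; case: (boolP (e y z)) => //= nyz.
symmetry; apply/existsP.
have [|[w [ew1 ew2]]] := reach y z ltac:(by rewrite eq_sym).
  by rewrite (negbTE nyz).
by exists w; rewrite ew1 ew2.
Qed.

Lemma s_lt_2sb : s < 2 * sb.
Proof.
have [_ [_ [x [y [xNy nxy]]]] /(_ x) [_ N2x _ inN2] _ _] := e_ext.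
have yN2x : y \in nbhd2 e x by rewrite -nbhd1_compl_nbhd2 inE /compl_graph xNy.
have [N2xy _] := inN2 y yN2x.
have := card_nbhd1_complI (nbhd2 e x) y.
by rewrite yN2x N2x N2xy; lia.
Qed.

Lemma exists_common_compl_neighbour y z :
  e y z -> exists w, compl_graph e y w && compl_graph e w z.
Proof.
move=> eyz; have [_ _ /(_ y) [_ N2y inN1 _] _ _] := e_ext.
have [N2yz _] := inN1 z ltac:(by rewrite inE).
have : 0 < #|nbhd2 e y :\: nbhd1 e z|.
  by have := cardsID (nbhd1 e z) (nbhd2 e y); have := s_lt_2sb; lia.
rewrite card_gt0 => /set0Pn [w]; rewrite !inE => /andP [nzw /and3P [wNy nyw _]].
exists w; rewrite /compl_graph eq_sym wNy nyw e_sym nzw /= andbT.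
by apply: contraNneq _ nyw => ->.
Qed.

Lemma nbhd2_compl y : nbhd2 (compl_graph e) y = nbhd1 e y.
Proof.
apply/setP => z; rewrite !inE; case: (boolP (e y z)) => eyz.
- have zNy : z != y by apply: contraTneq eyz => ->; rewrite e_irr.
  rewrite /compl_graph eyz andbF zNy /=.
  exact/existsP/exists_common_compl_neighbour.
- by case: eqP => //= /eqP zNy; rewrite /compl_graph eq_sym zNy eyz.
Qed.

Lemma diameter2_compl : diameter2 (compl_graph e).
Proof.
have [t_eq _ N _ cardT] := e_ext; split.
  move=> x y xNy; case: (boolP (e x y)) => exy.
  - right; have [w /andP [? ?]] := exists_common_compl_neighbour _ _ exy.
    by exists w.
  - by left; rewrite /compl_graph xNy exy.
have [x _] : exists x : T, x \in [set: T].
  by apply/set0Pn; rewrite -card_gt0 cardsT cardT.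
have [N1x _ _ _] := N x.
have : 0 < #|nbhd1 e x| by rewrite N1x; lia.
rewrite card_gt0 => /set0Pn [y]; rewrite inE => exy; exists x, y; split.
  by apply: contraTneq exy => ->; rewrite e_irr.
by rewrite /compl_graph exy andbF.
Qed.

Lemma compl_sphere_counts y :
  [/\ #|nbhd1 (compl_graph e) y| = 2 * sb,
      #|nbhd2 (compl_graph e) y| = 2 * s,
      (forall z, z \in nbhd1 (compl_graph e) y ->
         #|nbhd2 (compl_graph e) y :&: nbhd1 (compl_graph e) z| = s /\
         #|nbhd1 (compl_graph e) y :&: nbhd1 (compl_graph e) z| =
           2 * sb - s - 1) &
      (forall z, z \in nbhd2 (compl_graph e) y ->
         #|nbhd2 (compl_graph e) y :&: nbhd1 (compl_graph e) z| = sb /\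
         #|nbhd1 (compl_graph e) y :&: nbhd1 (compl_graph e) z| = sb)].
Proof.
have [t_eq _ /(_ y) [N1y N2y inN1 inN2] _ _] := e_ext.
have lt := s_lt_2sb.
rewrite nbhd1_compl_nbhd2 nbhd2_compl; split => // z zy.
- have [N2yz N1yz] := inN2 z zy.
  have zN1y : (z \in nbhd1 e y) = false.
    by move: zy; rewrite !inE => /and3P [_ /negbTE].
  have := card_nbhd1_complI (nbhd1 e y) z.
  have := card_nbhd1_complI (nbhd2 e y) z.
  by rewrite zy zN1y N1y N2y N1yz N2yz; lia.
- have [N2yz N1yz] := inN1 z zy.
  have zN2y : (z \in nbhd2 e y) = false.
    by move: zy; rewrite !inE => ->; rewrite andbF.
  have := card_nbhd1_complI (nbhd1 e y) z.
  have := card_nbhd1_complI (nbhd2 e y) z.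
  by rewrite zy zN2y N1y N2y N1yz N2yz; lia.
Qed.

Lemma compl_common_neighbours x y : compl_graph e x y ->
  #|[set z | compl_graph e x z && compl_graph e y z]| = 2 * sb - s - 1.
Proof.
move=> cxy; have [_ _ /(_ x) [_ N2x _ inN2] _ _] := e_ext.
have yN2x : y \in nbhd2 e x by rewrite -nbhd1_compl_nbhd2 inE.
have [N2xy _] := inN2 y yN2x.
have -> : [set z | compl_graph e x z & compl_graph e y z] =
          nbhd2 e x :&: nbhd1 (compl_graph e) y.
  by rewrite -nbhd1_compl_nbhd2; apply/setP => z; rewrite !inE.
have := card_nbhd1_complI (nbhd2 e x) y.
by rewrite yN2x N2x N2xy; have := s_lt_2sb; lia.
Qed.

Lemma extensible_compl : extensible (compl_graph e) (2 * sb - s - 1) sb s.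
Proof.
have [t_eq _ _ _ cardT] := e_ext; have lt := s_lt_2sb.
split; [lia | exact: diameter2_compl | exact: compl_sphere_counts
       | exact: compl_common_neighbours | lia].
Qed.

End Complement.

Theorem proposition6 (T : finType) (e : rel T) (t s sb : nat) :
  simple_graph e ->
  extensible e t s sb ->
  exists tb s' sb' : nat,
    [/\ extensible (compl_graph e) tb s' sb',
        s' = sb, sb' = s,
        t + tb + 2 = s + sb &
        t + tb + 2 = s' + sb'].
Proof.
move=> [e_sym e_irr] ext.
have [t_eq _ _ _ _] := ext; have lt := s_lt_2sb e_irr ext.
exists (2 * sb - s - 1), sb, s; split; try lia.
exact (extensible_compl e_irr e_sym ext).
Qed.
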